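(* Let $\gamma: I \to M$ be a unit speed curve on a smooth oriented surface $M \subset E^3$ with Darboux frame $\{T, V, U\}$, normal curvature $k_n$, geodesic curvature $k_g$ (nowhere zero) and geodesic torsion $\tau_g$, and suppose the position vector of $\gamma$ always lies in the plane spanned by $\{T, U\}$, i.e. $\gamma(s) = \lambda_1(s) T(s) + \lambda_2(s) U(s)$ for some differentiable functions $\lambda_1, \lambda_2$. Then $\gamma$ is a relatively normal-slant helix if and only if the function $$s \mapsto \frac{k_g^2}{(k_g^2 + \tau_g^2)^{3/2}}\, e^{\int \frac{\tau_g k_n}{k_g}\, ds}$$ is constant.
   Context: For a unit speed curve $\gamma$ on an oriented surface $M\subset E^3$, the Darboux frame is $T=\gamma'$, $U$ = unit normal of $M$ along $\gamma$, $V = U\times T$, satisfying $T' = k_g V + k_n U$, $V' = -k_g T + \tau_g U$, $U' = -k_n T - \tau_g V$; here $k_g$, $k_n$, $\tau_g$ are the geodesic curvature, normal curvature and geodesic torsion. The curve $\gamma$ is a relatively normal-slant helix if there is a fixed unit vector $d$ and a constant angle $\phi$ with $\langle V, d\rangle = \cos\phi$ along $\gamma$. The ''position vector'' is $\gamma(s)$ regarded as a vector from the origin. $\int \cdot\, ds$ denotes an antiderivative. *)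

From Stdlib Require Import Reals.
From Coquelicot Require Import Coquelicot.
Open Scope R_scope.

Definition vec3 : Type := (R * R * R)%type.
Definition vx (v : vec3) : R := fst (fst v).
Definition vy (v : vec3) : R := snd (fst v).
Definition vz (v : vec3) : R := snd v.
Definition mkv (a b c : R) : vec3 := (a, b, c).

Definition vadd (u v : vec3) : vec3 := mkv (vx u + vx v) (vy u + vy v) (vz u + vz v).
Definition vscal (k : R) (v : vec3) : vec3 := mkv (k * vx v) (k * vy v) (k * vz v).
Definition dot (u v : vec3) : R := vx u * vx v + vy u * vy v + vz u * vz v.
Definition cross (u v : vec3) : vec3 :=
  mkv (vy u * vz v - vz u * vy v)
      (vz u * vx v - vx u * vz v)
      (vx u * vy v - vy u * vx v).

Definition vderive (f : R -> vec3) (s : R) (v : vec3) : Prop :=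
  is_derive (fun t => vx (f t)) s (vx v) /\
  is_derive (fun t => vy (f t)) s (vy v) /\
  is_derive (fun t => vz (f t)) s (vz v).

Definition inI (a b : Rbar) (s : R) : Prop := Rbar_lt a s /\ Rbar_lt s b.

Definition smooth_on (a b : Rbar) (f : R -> R) : Prop :=
  forall n s, inI a b s -> ex_derive_n f n s.
Definition vsmooth_on (a b : Rbar) (f : R -> vec3) : Prop :=
  smooth_on a b (fun t => vx (f t)) /\ smooth_on a b (fun t => vy (f t)) /\
  smooth_on a b (fun t => vz (f t)).

(* Darboux frame {T, V, U} of a unit speed curve gamma on an oriented surface
   with unit normal U along gamma, together with kg, kn, taug:
   T = gamma', V = U x T, T' = kg V + kn U, V' = -kg T + taug U,
   U' = -kn T - taug V. *)
Definition darboux_frame (a b : Rbar) (gamma T V U : R -> vec3)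
  (kg kn taug : R -> R) : Prop :=
  vsmooth_on a b gamma /\ vsmooth_on a b U /\
  forall s, inI a b s ->
    vderive gamma s (T s) /\
    dot (T s) (T s) = 1 /\ dot (U s) (U s) = 1 /\ dot (T s) (U s) = 0 /\
    V s = cross (U s) (T s) /\
    vderive T s (vadd (vscal (kg s) (V s)) (vscal (kn s) (U s))) /\
    vderive V s (vadd (vscal (- kg s) (T s)) (vscal (taug s) (U s))) /\
    vderive U s (vadd (vscal (- kn s) (T s)) (vscal (- taug s) (V s))).

Definition rel_normal_slant_helix (a b : Rbar) (V : R -> vec3) : Prop :=
  exists (d : vec3) (phi : R), dot d d = 1 /\
    forall s, inI a b s -> dot (V s) d = cos phi.

(* Differentiating gamma = l1 T + l2 U with the Darboux equations gives
     l1' = 1 + l2 kn,   l1 kg = l2 taug,   l2' = - l1 kn,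
   so l2 e^F is constant, and it is nonzero.  With r = |gamma| =
   sqrt (l1^2 + l2^2) one has r' = l1 / r, and the function of the theorem is
   |l2 e^F| |rho| for the "slant ratio" rho = l2^2 / (kg r^3).  The heart of the
   proof is that gamma is a relatively normal-slant helix iff rho is constant:
   for an axis d with <V, d> = c, the projections of d on T and U are
   proportional to (l1, l2), <gamma, d> = Q r for a constant Q, Q^2 + c^2 = 1
   and rho = c / Q; conversely, if rho = g, then Q gamma / r + g Q V with
   Q = 1 / sqrt (1 + g^2) is a constant unit axis.  Finally rho kg > 0 and kg
   is continuous (gamma is smooth), so rho keeps its sign and |rho| constant
   forces rho constant. *)

From Stdlib Require Import Reals Lra Psatz Ranalysis5.
From Coquelicot Require Import Coquelicot.
Open Scope R_scope.

Definition vzero : vec3 := mkv 0 0 0.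

Lemma vec_ext u v : vx u = vx v -> vy u = vy v -> vz u = vz v -> u = v.
Proof.
  destruct u as [[u1 u2] u3], v as [[v1 v2] v3]; unfold vx, vy, vz; simpl.
  now intros -> -> ->.
Qed.

Lemma dot_comm u v : dot u v = dot v u.
Proof. unfold dot; ring. Qed.

Lemma dot_vadd_l u v w : dot (vadd u v) w = dot u w + dot v w.
Proof. unfold dot, vadd, vx, vy, vz, mkv; simpl; ring. Qed.

Lemma dot_vadd_r u v w : dot w (vadd u v) = dot w u + dot w v.
Proof. unfold dot, vadd, vx, vy, vz, mkv; simpl; ring. Qed.

Lemma dot_vscal_l k u w : dot (vscal k u) w = k * dot u w.
Proof. unfold dot, vscal, vx, vy, vz, mkv; simpl; ring. Qed.

Lemma dot_vscal_r k u w : dot w (vscal k u) = k * dot w u.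
Proof. unfold dot, vscal, vx, vy, vz, mkv; simpl; ring. Qed.

(* For an orthonormal pair (T, U), the vector U x T completes it to an
   orthonormal frame (Lagrange's identity gives its length). *)
Lemma cross_orthonormal T U : dot T T = 1 -> dot U U = 1 -> dot T U = 0 ->
  dot (cross U T) T = 0 /\ dot (cross U T) U = 0 /\ dot (cross U T) (cross U T) = 1.
Proof.
  destruct T as [[t1 t2] t3], U as [[u1 u2] u3].
  unfold dot, cross, vx, vy, vz, mkv; simpl; intros HT HU HTU.
  split; [ring | split; [ring |]].
  transitivity ((u1 * u1 + u2 * u2 + u3 * u3) * (t1 * t1 + t2 * t2 + t3 * t3)
                - (t1 * u1 + t2 * u2 + t3 * u3) ^ 2); [ring |].
  rewrite HT, HU, HTU; ring.
Qed.

(* Parseval's identity in the frame (T, U x T, U), obtained from the Gram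
   identity expressing <d, U x T>^2 through the other inner products. *)
Lemma parseval T U d : dot T T = 1 -> dot U U = 1 -> dot T U = 0 ->
  (dot d T) ^ 2 + (dot d (cross U T)) ^ 2 + (dot d U) ^ 2 = dot d d.
Proof.
  intros HT HU HTU.
  assert (Gram : (dot d (cross U T)) ^ 2 =
      dot d d * (dot T T * dot U U - (dot T U) ^ 2)
      - dot d T * (dot d T * dot U U - dot T U * dot d U)
      + dot d U * (dot d T * dot T U - dot T T * dot d U)).
  { destruct d as [[d1 d2] d3], T as [[t1 t2] t3], U as [[u1 u2] u3].
    unfold dot, cross, vx, vy, vz, mkv; simpl; ring. }
  rewrite Gram, HT, HU, HTU; ring.
Qed.

Lemma frame_orthogonal_zero T U w : dot T T = 1 -> dot U U = 1 -> dot T U = 0 ->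
  dot w T = 0 -> dot w (cross U T) = 0 -> dot w U = 0 -> w = vzero.
Proof.
  intros HT HU HTU h1 h2 h3.
  pose proof (parseval T U w HT HU HTU) as P.
  rewrite h1, h2, h3 in P.
  destruct w as [[w1 w2] w3]; unfold dot, vx, vy, vz in P; simpl in P.
  unfold vzero, mkv; f_equal; [f_equal |]; nra.
Qed.

(* Coquelicot's differentiation rules for real functions, with derivatives
   written as real expressions so that ring and field apply to them. *)
Lemma derive_mult (f g : R -> R) x df dg : is_derive f x df -> is_derive g x dg ->
  is_derive (fun t => f t * g t) x (df * g x + f x * dg).
Proof. intros Hf Hg; apply (is_derive_mult f g x df dg Hf Hg); intros; apply Rmult_comm. Qed.

Lemma derive_plus (f g : R -> R) x df dg : is_derive f x df -> is_derive g x dg ->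
  is_derive (fun t => f t + g t) x (df + dg).
Proof. intros Hf Hg; apply (is_derive_plus f g x df dg Hf Hg). Qed.

Lemma derive_const (c x : R) : is_derive (fun _ => c) x 0.
Proof. apply (is_derive_const (K := R_AbsRing) (V := R_NormedModule)). Qed.

Lemma derive_inv (f : R -> R) x df : is_derive f x df -> f x <> 0 ->
  is_derive (fun t => / f t) x (- df / f x ^ 2).
Proof. apply is_derive_inv. Qed.

Lemma derive_exp (f : R -> R) x df : is_derive f x df ->
  is_derive (fun t => exp (f t)) x (df * exp (f x)).
Proof. intros Hf; exact (is_derive_comp exp f x (exp (f x)) df (is_derive_exp _) Hf). Qed.

Lemma derive_continuity_pt (f : R -> R) x l : is_derive f x l -> continuity_pt f x.
Proof.
  intros H; apply continuity_pt_filterlim, (ex_derive_continuous f x); exists l; exact H.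
Qed.

Lemma derive_eq (f : R -> R) (x l m : R) : is_derive f x l -> l = m -> is_derive f x m.
Proof. now intros H ->. Qed.

Lemma vderive_add (f g : R -> vec3) s df dg : vderive f s df -> vderive g s dg ->
  vderive (fun t => vadd (f t) (g t)) s (vadd df dg).
Proof.
  intros (fx & fy & fz) (gx & gy & gz).
  split; [| split]; [exact (derive_plus _ _ _ _ _ fx gx)
    | exact (derive_plus _ _ _ _ _ fy gy) | exact (derive_plus _ _ _ _ _ fz gz)].
Qed.

Lemma vderive_scal (k : R -> R) (f : R -> vec3) s dk df : is_derive k s dk -> vderive f s df ->
  vderive (fun t => vscal (k t) (f t)) s (vadd (vscal dk (f s)) (vscal (k s) df)).
Proof.
  intros Hk (fx & fy & fz).
  split; [| split]; [exact (derive_mult _ _ _ _ _ Hk fx)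
    | exact (derive_mult _ _ _ _ _ Hk fy) | exact (derive_mult _ _ _ _ _ Hk fz)].
Qed.

Lemma vderive_ext_loc (f g : R -> vec3) s v : locally s (fun t => f t = g t) ->
  vderive f s v -> vderive g s v.
Proof.
  intros Hfg (fx & fy & fz).
  split; [| split]; (eapply is_derive_ext_loc; [| eassumption]);
    (eapply filter_imp; [| exact Hfg]); intros t ->; reflexivity.
Qed.

Lemma vderive_unique (f : R -> vec3) s v w : vderive f s v -> vderive f s w -> v = w.
Proof.
  destruct v as [[v1 v2] v3], w as [[w1 w2] w3].
  intros (vx' & vy' & vz') (wx & wy & wz).
  apply is_derive_unique in vx', vy', vz', wx, wy, wz.
  unfold vx, vy, vz in *; simpl in *; congruence.
Qed.

Lemma vderive_dot (f : R -> vec3) s v d : vderive f s v ->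
  is_derive (fun t => dot (f t) d) s (dot v d).
Proof.
  intros (fx & fy & fz); unfold dot.
  eapply derive_eq.
  - apply derive_plus; [apply derive_plus |];
      apply derive_mult; try eassumption; apply derive_const.
  - cbv beta; ring.
Qed.

Section OpenInterval.

Variables a b : Rbar.

Lemma inI_locally s : inI a b s -> locally s (inI a b).
Proof. intros [H1 H2]; apply (locally_interval _ s a b H1 H2); intros; split; auto. Qed.

Lemma inI_between x y t : inI a b x -> inI a b y -> x <= t <= y -> inI a b t.
Proof.
  intros [h1 h2] [h3 h4] [h5 h6]; split.
  - destruct a as [a'| |]; simpl in *; auto; lra.
  - destruct b as [b'| |]; simpl in *; auto; lra.
Qed.

Lemma inI_inhabited : Rbar_lt a b -> exists s, inI a b s.
Proof.
  unfold inI; destruct a as [a'| |], b as [b'| |]; simpl; intro H; try contradiction.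
  - exists ((a' + b') / 2); simpl; lra.
  - exists (a' + 1); simpl; lra.
  - exists (b' - 1); simpl; lra.
  - exists 0; simpl; auto.
Qed.

Lemma zero_derive_const (f : R -> R) x y : (forall s, inI a b s -> is_derive f s 0) ->
  inI a b x -> inI a b y -> f x = f y.
Proof.
  intros Hf Hx Hy.
  assert (Hseg : forall t, Rmin x y <= t <= Rmax x y -> inI a b t).
  { intros t Ht; apply (inI_between (Rmin x y) (Rmax x y)); auto;
      [unfold Rmin | unfold Rmax]; destruct (Rle_dec x y); auto. }
  destruct (MVT_gen f x y (fun _ => 0)) as [c [_ E]].
  - intros t Ht; apply Hf, Hseg; lra.
  - intros t Ht; apply (derive_continuity_pt f t 0), Hf, Hseg, Ht.
  - lra.
Qed.

Lemma vzero_derive_const (f : R -> vec3) x y : (forall s, inI a b s -> vderive f s vzero) ->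
  inI a b x -> inI a b y -> f x = f y.
Proof.
  intros Hf Hx Hy.
  assert (Hc : forall proj : vec3 -> R, proj vzero = 0 ->
     (forall s, inI a b s -> is_derive (fun t => proj (f t)) s (proj vzero)) ->
     proj (f x) = proj (f y)).
  { intros proj H0 Hp; apply (zero_derive_const (fun t => proj (f t))); auto.
    intros s Hs; rewrite <- H0; auto. }
  apply vec_ext; apply Hc; try reflexivity; intros s Hs; apply Hf, Hs.
Qed.

Lemma nonvanishing_sign_const (f : R -> R) x y : (forall s, inI a b s -> continuity_pt f s) ->
  (forall s, inI a b s -> f s <> 0) -> inI a b x -> inI a b y -> 0 < f x -> 0 < f y.
Proof.
  intros Hc Hn Hx Hy Hp.
  destruct (Rlt_or_le 0 (f y)) as [h | h]; auto; exfalso.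
  assert (Hneg : f y < 0) by (destruct h; auto; exfalso; now apply (Hn y)).
  destruct (Rtotal_order x y) as [Hxy | [-> | Hyx]]; [| lra |].
  - destruct (IVT_interv (fun t => - f t) x y) as [z [Hz Ez]]; try lra.
    + intros t Ht; apply continuity_pt_opp, Hc, (inI_between x y); auto.
    + apply (Hn z); [apply (inI_between x y); auto | lra].
  - destruct (IVT_interv f y x) as [z [Hz Ez]]; try lra.
    + intros t Ht; apply Hc, (inI_between y x); auto.
    + apply (Hn z); [apply (inI_between y x); auto | lra].
Qed.

Lemma abs_const_same_sign (f w : R -> R) m : Rbar_lt a b ->
  (forall s, inI a b s -> continuity_pt w s) -> (forall s, inI a b s -> 0 < f s * w s) ->
  (forall s, inI a b s -> Rabs (f s) = m) -> exists g, forall s, inI a b s -> f s = g.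
Proof.
  intros Hab Hc Hsign Habs.
  destruct (inI_inhabited Hab) as [s0 Hs0].
  assert (Hn : forall s, inI a b s -> w s <> 0).
  { intros s Hs E; specialize (Hsign s Hs); rewrite E, Rmult_0_r in Hsign; lra. }
  destruct (Rlt_or_le 0 (w s0)) as [Hpos | Hnpos].
  - exists m; intros s Hs; rewrite <- (Habs s Hs); symmetry; apply Rabs_pos_eq.
    pose proof (nonvanishing_sign_const w s0 s Hc Hn Hs0 Hs Hpos).
    specialize (Hsign s Hs); nra.
  - exists (- m); intros s Hs; rewrite <- (Habs s Hs).
    assert (Hneg : 0 < - w s0) by (destruct Hnpos; [lra | now exfalso; apply (Hn s0)]).
    pose proof (nonvanishing_sign_const (fun t => - w t) s0 s
      (fun t Ht => continuity_pt_opp _ _ (Hc t Ht)) (fun t Ht E => Hn t Ht ltac:(lra))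
      Hs0 Hs Hneg).
    specialize (Hsign s Hs); rewrite Rabs_left; [ring | nra].
Qed.

Lemma second_derivative_continuous (g h dh : R -> R) s : smooth_on a b g ->
  (forall t, inI a b t -> is_derive g t (h t)) -> (forall t, inI a b t -> is_derive h t (dh t)) ->
  inI a b s -> continuity_pt dh s.
Proof.
  intros Hsm Hg Hh Hs.
  apply continuity_pt_filterlim, (continuous_ext_loc _ (Derive_n g 2)).
  - eapply filter_imp; [| apply (inI_locally s Hs)]; intros t Ht; simpl.
    rewrite <- (is_derive_unique _ _ _ (Hh t Ht)); apply Derive_ext_loc.
    eapply filter_imp; [| apply (inI_locally t Ht)]; intros y Hy.
    apply (is_derive_unique _ _ _ (Hg y Hy)).
  - exact (ex_derive_continuous (Derive_n g 2) s (Hsm 3%nat s Hs)).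
Qed.

End OpenInterval.

Hint Rewrite dot_vadd_l dot_vadd_r dot_vscal_l dot_vscal_r : dot_linear.

Lemma Rpower_sq_three_halves w : 0 < w -> Rpower (w ^ 2) (3 / 2) = w ^ 3.
Proof.
  intros Hw; rewrite <- (Rpower_pow 2 w Hw), Rpower_mult.
  replace (INR 2 * (3 / 2)) with (INR 3) by (simpl; field).
  apply Rpower_pow, Hw.
Qed.

(* When l1 kg = l2 taug and r^2 = l1^2 + l2^2, one has kg^2 + taug^2 = (kg r / l2)^2,
   so the curvature factor of the theorem is |l2| |l2^2 / (kg r^3)|. *)
Lemma curvature_factor_coords kg tau l1 l2 r : kg <> 0 -> l2 <> 0 -> 0 < r ->
  r ^ 2 = l1 ^ 2 + l2 ^ 2 -> l1 * kg = l2 * tau ->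
  kg ^ 2 / Rpower (kg ^ 2 + tau ^ 2) (3 / 2) = Rabs l2 * Rabs (l2 ^ 2 / (kg * r ^ 3)).
Proof.
  intros Hkg Hl2 Hr Hr2 Htau.
  assert (Pkg := Rabs_pos_lt _ Hkg). assert (Pl2 := Rabs_pos_lt _ Hl2).
  assert (Hsum : kg ^ 2 + tau ^ 2 = (Rabs kg * r / Rabs l2) ^ 2).
  { replace tau with (l1 * kg / l2) by (field_simplify_eq; [lra | auto]).
    unfold Rdiv; rewrite !Rpow_mult_distr, !pow_inv, !pow2_abs.
    field_simplify_eq; auto; rewrite Hr2; ring. }
  assert (Hw : 0 < Rabs kg * r / Rabs l2) by (apply Rdiv_lt_0_compat; [apply Rmult_lt_0_compat |]; auto).
  rewrite Hsum, (Rpower_sq_three_halves _ Hw).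
  unfold Rdiv at 3; rewrite Rabs_mult, Rabs_inv, Rabs_mult, (Rabs_pos_eq (r ^ 3))
    by (apply pow_le; lra).
  rewrite <- RPow_abs, <- (pow2_abs kg); field.
  repeat split; try lra; apply pow_nonzero; lra.
Qed.

Lemma proportional_coords l1 l2 x z r :
  r ^ 2 = l1 ^ 2 + l2 ^ 2 -> r <> 0 -> l2 * x = l1 * z ->
  x = l1 * (l1 * x + l2 * z) / r ^ 2 /\ z = l2 * (l1 * x + l2 * z) / r ^ 2.
Proof.
  intros Hr2 Hr P.
  split; field_simplify_eq; auto; rewrite Hr2.
  - transitivity (l1 ^ 2 * x + l2 * (l2 * x)); [ring | rewrite P; ring].
  - transitivity (l1 * (l1 * z) + l2 ^ 2 * z); [ring | rewrite <- P; ring].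
Qed.

Section DarbouxFrame.

Variables (a b : Rbar) (gamma T V U : R -> vec3) (kg kn taug : R -> R).
Hypothesis frame : darboux_frame a b gamma T V U kg kn taug.

Lemma frame_derivatives s : inI a b s ->
  vderive gamma s (T s) /\
  vderive T s (vadd (vscal (kg s) (V s)) (vscal (kn s) (U s))) /\
  vderive V s (vadd (vscal (- kg s) (T s)) (vscal (taug s) (U s))) /\
  vderive U s (vadd (vscal (- kn s) (T s)) (vscal (- taug s) (V s))).
Proof.
  intros Hs; destruct frame as (_ & _ & Hf).
  destruct (Hf s Hs) as (Hg & _ & _ & _ & _ & HT & HV & HU); auto.
Qed.

Lemma frame_gram s : inI a b s ->
  dot (T s) (T s) = 1 /\ dot (T s) (V s) = 0 /\ dot (T s) (U s) = 0 /\
  dot (V s) (T s) = 0 /\ dot (V s) (V s) = 1 /\ dot (V s) (U s) = 0 /\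
  dot (U s) (T s) = 0 /\ dot (U s) (V s) = 0 /\ dot (U s) (U s) = 1.
Proof.
  intros Hs; destruct frame as (_ & _ & Hf).
  destruct (Hf s Hs) as (_ & HTT & HUU & HTU & HV & _).
  destruct (cross_orthonormal _ _ HTT HUU HTU) as (HVT & HVU & HVV).
  rewrite <- HV in HVT, HVU, HVV.
  rewrite (dot_comm (T s) (V s)), (dot_comm (U s) (T s)), (dot_comm (U s) (V s)).
  repeat split; assumption.
Qed.

Ltac frame_dots s Hs :=
  let TT := fresh in let TV := fresh in let TU := fresh in
  let VT := fresh in let VV := fresh in let VU := fresh in
  let UT := fresh in let UV := fresh in let UU := fresh in
  destruct (frame_gram s Hs) as (TT & TV & TU & VT & VV & VU & UT & UV & UU);
  autorewrite with dot_linear in *;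
  rewrite ?TT, ?TV, ?TU, ?VT, ?VV, ?VU, ?UT, ?UV, ?UU in *;
  clear TT TV TU VT VV VU UT UV UU.

Lemma frame_parseval s d : inI a b s ->
  (dot d (T s)) ^ 2 + (dot d (V s)) ^ 2 + (dot d (U s)) ^ 2 = dot d d.
Proof.
  intros Hs; destruct frame as (_ & _ & Hf).
  destruct (Hf s Hs) as (_ & HTT & HUU & HTU & -> & _).
  apply parseval; assumption.
Qed.

Lemma frame_zero s w : inI a b s ->
  dot w (T s) = 0 -> dot w (V s) = 0 -> dot w (U s) = 0 -> w = vzero.
Proof.
  intros Hs; destruct frame as (_ & _ & Hf).
  destruct (Hf s Hs) as (_ & HTT & HUU & HTU & -> & _).
  apply frame_orthogonal_zero; assumption.
Qed.

(* kg = <T', V> = <gamma'', V> is continuous since gamma is smooth. *)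
Lemma kg_continuous s : inI a b s -> continuity_pt kg s.
Proof.
  intros Hs; destruct frame as ((Hgx & Hgy & Hgz) & _ & _).
  set (dT := fun t => vadd (vscal (kg t) (V t)) (vscal (kn t) (U t))).
  assert (HdT : forall t, inI a b t -> vderive gamma t (T t) /\ vderive T t (dT t))
    by (intros t Ht; destruct (frame_derivatives t Ht) as (? & ? & _); auto).
  assert (Cx : continuity_pt (fun t => vx (dT t)) s)
    by (apply (second_derivative_continuous a b (fun t => vx (gamma t)) (fun t => vx (T t))); auto;
        intros t Ht; apply (HdT t Ht)).
  assert (Cy : continuity_pt (fun t => vy (dT t)) s)
    by (apply (second_derivative_continuous a b (fun t => vy (gamma t)) (fun t => vy (T t))); auto;
        intros t Ht; apply (HdT t Ht)).
  assert (Cz : continuity_pt (fun t => vz (dT t)) s)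
    by (apply (second_derivative_continuous a b (fun t => vz (gamma t)) (fun t => vz (T t))); auto;
        intros t Ht; apply (HdT t Ht)).
  destruct (frame_derivatives s Hs) as (_ & _ & (Vx & Vy & Vz) & _).
  apply derive_continuity_pt in Vx, Vy, Vz.
  apply (continuity_pt_ext_loc (fun t => dot (dT t) (V t))).
  - eapply filter_imp; [| apply (inI_locally a b s Hs)]; intros t Ht.
    unfold dT; frame_dots t Ht; ring.
  - unfold dot; apply continuity_pt_plus; [apply continuity_pt_plus |];
      apply continuity_pt_mult; assumption.
Qed.

Section PositionInTUPlane.

Variables l1 l2 : R -> R.
Hypothesis coeffs_derivable : forall s, inI a b s -> ex_derive l1 s /\ ex_derive l2 s.
Hypothesis position : forall s, inI a b s ->
  gamma s = vadd (vscal (l1 s) (T s)) (vscal (l2 s) (U s)).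

Lemma position_coords s : inI a b s ->
  dot (gamma s) (T s) = l1 s /\ dot (gamma s) (V s) = 0 /\ dot (gamma s) (U s) = l2 s.
Proof. intros Hs; rewrite (position s Hs); frame_dots s Hs; repeat split; ring. Qed.

(* Differentiating gamma = l1 T + l2 U with the Darboux equations and reading
   off the coordinates of gamma' = T in the frame. *)
Lemma coefficient_equations s : inI a b s ->
  Derive l1 s = 1 + l2 s * kn s /\ l1 s * kg s = l2 s * taug s /\
  Derive l2 s = - (l1 s * kn s).
Proof.
  intros Hs.
  destruct (coeffs_derivable s Hs) as [[d1 H1] [d2 H2]].
  rewrite (is_derive_unique _ _ _ H1), (is_derive_unique _ _ _ H2).
  destruct (frame_derivatives s Hs) as (Hg & HT & _ & HU).
  assert (Hloc : locally s (fun t => vadd (vscal (l1 t) (T t)) (vscal (l2 t) (U t)) = gamma t)).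
  { eapply filter_imp; [| apply (inI_locally a b s Hs)]; intros t Ht; now rewrite (position t Ht). }
  pose proof (vderive_unique _ _ _ _ Hg (vderive_ext_loc _ _ _ _ Hloc
    (vderive_add _ _ _ _ _ (vderive_scal _ _ _ _ _ H1 HT) (vderive_scal _ _ _ _ _ H2 HU)))) as E.
  pose proof (f_equal (fun w => dot w (T s)) E) as ET.
  pose proof (f_equal (fun w => dot w (V s)) E) as EV.
  pose proof (f_equal (fun w => dot w (U s)) E) as EU.
  cbv beta in ET, EV, EU; frame_dots s Hs.
  repeat split; lra.
Qed.

Hypothesis kg_nonzero : forall s, inI a b s -> kg s <> 0.
Variable F : R -> R.
Hypothesis F_derive : forall s, inI a b s -> is_derive F s (taug s * kn s / kg s).

(* e^F is an integrating factor for l2' = - (taug kn / kg) l2. *)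
Lemma l2_exp_F_derive s : inI a b s -> is_derive (fun t => l2 t * exp (F t)) s 0.
Proof.
  intros Hs; destruct (coeffs_derivable s Hs) as [_ [d2 H2]].
  destruct (coefficient_equations s Hs) as (_ & E2 & E3).
  eapply derive_eq; [apply derive_mult; [exact H2 | apply derive_exp, F_derive, Hs] |].
  rewrite <- (is_derive_unique _ _ _ H2), E3.
  pose proof (kg_nonzero s Hs).
  apply (Rmult_eq_reg_l (kg s)); auto.
  transitivity ((l2 s * taug s - l1 s * kg s) * kn s * exp (F s)); [field; auto | rewrite E2; ring].
Qed.

(* l2 never vanishes: otherwise l2 e^F = 0 forces l2 = l1 = 0 on I,
   contradicting l1' = 1 + l2 kn. *)
Lemma l2_nonzero s : inI a b s -> l2 s <> 0.
Proof.
  intros Hs E0.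
  assert (Hl2 : forall t, inI a b t -> l2 t = 0).
  { intros t Ht.
    pose proof (zero_derive_const a b _ t s l2_exp_F_derive Ht Hs) as E.
    cbv beta in E; rewrite E0, Rmult_0_l in E; pose proof (exp_pos (F t)); nra. }
  assert (Hl1 : forall t, inI a b t -> l1 t = 0).
  { intros t Ht; destruct (coefficient_equations t Ht) as (_ & E2 & _).
    rewrite (Hl2 t Ht), Rmult_0_l in E2.
    destruct (Rmult_integral _ _ E2); auto; now exfalso; apply (kg_nonzero t). }
  destruct (coefficient_equations s Hs) as (E1 & _).
  rewrite (Derive_ext_loc l1 (fun _ => 0)), Derive_const, E0 in E1; [lra |].
  eapply filter_imp; [| apply (inI_locally a b s Hs)]; exact Hl1.
Qed.

Definition radius t := sqrt (l1 t ^ 2 + l2 t ^ 2).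

Lemma radius_sq s : inI a b s -> radius s ^ 2 = l1 s ^ 2 + l2 s ^ 2 /\ 0 < radius s.
Proof.
  intros Hs; pose proof (l2_nonzero s Hs).
  assert (Hpos : 0 < l1 s ^ 2 + l2 s ^ 2) by nra.
  unfold radius; split; [apply pow2_sqrt | apply sqrt_lt_R0]; lra.
Qed.

Lemma inv_radius_derive s : inI a b s ->
  is_derive (fun t => / radius t) s (- l1 s / radius s ^ 3).
Proof.
  intros Hs; destruct (radius_sq s Hs) as [Hr2 Hr].
  destruct (coeffs_derivable s Hs) as [[d1 H1] [d2 H2]].
  destruct (coefficient_equations s Hs) as (E1 & _ & E3).
  rewrite (is_derive_unique _ _ _ H1) in E1; rewrite (is_derive_unique _ _ _ H2) in E3.
  eapply derive_eq.
  - apply derive_inv; [| lra].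
    apply is_derive_sqrt; [| pose proof (l2_nonzero s Hs); nra].
    apply derive_plus; apply is_derive_pow; eassumption.
  - cbv beta; fold (radius s); rewrite E1, E3; simpl; field; lra.
Qed.

(* The quantity that is constant exactly along relatively normal-slant helices. *)
Definition slant_ratio t := l2 t ^ 2 / (kg t * radius t ^ 3).

Lemma slant_ratio_sign s : inI a b s -> 0 < slant_ratio s * kg s.
Proof.
  intros Hs; destruct (radius_sq s Hs) as [_ Hr].
  pose proof (l2_nonzero s Hs); pose proof (kg_nonzero s Hs).
  replace (slant_ratio s * kg s) with (l2 s ^ 2 / radius s ^ 3)
    by (unfold slant_ratio; field; lra).
  apply Rdiv_lt_0_compat; [apply pow2_gt_0 | apply pow_lt]; auto.
Qed.

Lemma curvature_function_coords s : inI a b s ->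
  kg s ^ 2 / Rpower (kg s ^ 2 + taug s ^ 2) (3 / 2) * exp (F s) =
  Rabs (l2 s * exp (F s)) * Rabs (slant_ratio s).
Proof.
  intros Hs; destruct (radius_sq s Hs) as [Hr2 Hr].
  destruct (coefficient_equations s Hs) as (_ & E2 & _).
  rewrite (curvature_factor_coords (kg s) (taug s) (l1 s) (l2 s) (radius s));
    auto using kg_nonzero, l2_nonzero.
  rewrite Rabs_mult, (Rabs_pos_eq (exp (F s))) by (left; apply exp_pos).
  unfold slant_ratio; ring.
Qed.

Section HelixAxis.

Variables (d : vec3) (c : R).
Hypothesis d_unit : dot d d = 1.
Hypothesis V_angle : forall s, inI a b s -> dot (V s) d = c.

Lemma axis_relations s : inI a b s ->
  is_derive (fun t => dot (gamma t) d) s (dot (T s) d) /\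
  is_derive (fun t => dot (T t) d) s (kg s * c + kn s * dot (U s) d) /\
  kg s * dot (T s) d = taug s * dot (U s) d.
Proof.
  intros Hs; destruct (frame_derivatives s Hs) as (Hg & HT & HV & _).
  assert (HV0 : is_derive (fun t => dot (V t) d) s 0).
  { apply (is_derive_ext_loc (fun _ => c)); [| apply derive_const].
    eapply filter_imp; [| apply (inI_locally a b s Hs)]; intros t Ht; now rewrite V_angle. }
  pose proof (is_derive_unique _ _ _ (vderive_dot _ _ _ d HV)) as E.
  rewrite (is_derive_unique _ _ _ HV0) in E.
  autorewrite with dot_linear in E.
  split; [exact (vderive_dot _ _ _ d Hg) | split; [| lra]].
  eapply derive_eq; [exact (vderive_dot _ _ _ d HT) |].
  autorewrite with dot_linear; rewrite V_angle; auto.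
Qed.

Lemma axis_proportional s : inI a b s -> l2 s * dot (T s) d = l1 s * dot (U s) d.
Proof.
  intros Hs; destruct (axis_relations s Hs) as (_ & _ & E).
  destruct (coefficient_equations s Hs) as (_ & E2 & _).
  apply (Rmult_eq_reg_l (kg s)); [| apply kg_nonzero, Hs].
  transitivity (l2 s * (kg s * dot (T s) d)); [ring | rewrite E].
  transitivity ((l1 s * kg s) * dot (U s) d); [rewrite E2 | ]; ring.
Qed.

Lemma axis_height_derive s : inI a b s ->
  is_derive (fun t => dot (gamma t) d * / radius t) s 0.
Proof.
  intros Hs; destruct (radius_sq s Hs) as [Hr2 Hr].
  destruct (axis_relations s Hs) as (Hh & _ & _).
  eapply derive_eq; [apply derive_mult; [exact Hh | apply inv_radius_derive, Hs] |].
  cbv beta; rewrite (position s Hs); autorewrite with dot_linear.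
  apply (Rmult_eq_reg_l (radius s ^ 3)); [| apply pow_nonzero; lra].
  transitivity (l2 s * (l2 s * dot (T s) d - l1 s * dot (U s) d)).
  - replace (radius s ^ 3) with (radius s ^ 2 * radius s) by ring.
    rewrite Hr2; field; rewrite <- Hr2; split; [| apply pow_nonzero]; lra.
  - pose proof (axis_proportional s Hs).
    rewrite Rmult_0_r; apply Rmult_eq_0_compat_l; lra.
Qed.

Section FixedHeight.

Variable Q : R.
Hypothesis height : forall s, inI a b s -> dot (gamma s) d = Q * radius s.

Lemma axis_coords s : inI a b s ->
  dot (T s) d = l1 s * Q / radius s /\ dot (U s) d = l2 s * Q / radius s.
Proof.
  intros Hs; destruct (radius_sq s Hs) as [Hr2 Hr].
  pose proof (axis_proportional s Hs) as P.
  pose proof (height s Hs) as H; rewrite (position s Hs) in H; autorewrite with dot_linear in H.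
  destruct (proportional_coords (l1 s) (l2 s) (dot (T s) d) (dot (U s) d) (radius s))
    as [Ex Ez]; try lra; auto.
  rewrite H in Ex, Ez; rewrite Ex, Ez at 1; split; field; lra.
Qed.

(* Differentiating <T, d> = l1 Q / r in two ways. *)
Lemma axis_curvature s : inI a b s -> Q * l2 s ^ 2 / radius s ^ 3 = kg s * c.
Proof.
  intros Hs; destruct (radius_sq s Hs) as [Hr2 Hr].
  destruct (coeffs_derivable s Hs) as [[d1 H1] _].
  destruct (coefficient_equations s Hs) as (E1 & _ & _).
  rewrite (is_derive_unique _ _ _ H1) in E1.
  destruct (axis_relations s Hs) as (_ & HT & _).
  assert (HT' : is_derive (fun t => dot (T t) d) s
                  (d1 * Q * / radius s + l1 s * Q * (- l1 s / radius s ^ 3))).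
  { apply (is_derive_ext_loc (fun t => l1 t * Q * / radius t)).
    - eapply filter_imp; [| apply (inI_locally a b s Hs)]; intros t Ht.
      rewrite (proj1 (axis_coords t Ht)); reflexivity.
    - eapply derive_eq; [apply derive_mult; [apply derive_mult; [exact H1 | apply derive_const]
                                          | apply inv_radius_derive, Hs] | cbv beta; ring]. }
  pose proof (is_derive_unique _ _ _ HT) as E; rewrite (is_derive_unique _ _ _ HT') in E.
  rewrite (proj2 (axis_coords s Hs)), E1 in E.
  apply (Rplus_eq_reg_r (kn s * (l2 s * Q / radius s))); rewrite <- E.
  replace (radius s ^ 3) with (radius s ^ 2 * radius s) by ring.
  rewrite Hr2; field; rewrite <- Hr2; split; [| apply pow_nonzero]; lra.
Qed.

(* Parseval's identity for the unit vector d in the frame at s. *)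
Lemma axis_pythagoras s : inI a b s -> Q ^ 2 + c ^ 2 = 1.
Proof.
  intros Hs; destruct (radius_sq s Hs) as [Hr2 Hr].
  pose proof (frame_parseval s d Hs) as P.
  destruct (axis_coords s Hs) as [Ex Ez].
  rewrite !(dot_comm d), V_angle, d_unit, Ex, Ez in P; auto.
  rewrite <- P; transitivity ((l1 s ^ 2 + l2 s ^ 2) * Q ^ 2 / radius s ^ 2 + c ^ 2).
  - rewrite <- Hr2; field; lra.
  - field; lra.
Qed.

(* Q <> 0 since Q = 0 would force kg c = 0, hence c = 0, against Q^2 + c^2 = 1. *)
Lemma slant_ratio_of_axis s : inI a b s -> slant_ratio s = c / Q.
Proof.
  intros Hs; destruct (radius_sq s Hs) as [_ Hr].
  pose proof (axis_curvature s Hs) as K; pose proof (axis_pythagoras s Hs) as P.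
  pose proof (kg_nonzero s Hs); pose proof (l2_nonzero s Hs).
  assert (HQ : Q <> 0).
  { intros E0; rewrite E0 in K, P.
    assert (Hc : kg s * c = 0) by (rewrite <- K; field; lra).
    destruct (Rmult_integral _ _ Hc); [contradiction | nra]. }
  unfold slant_ratio; apply (Rmult_eq_reg_l (kg s * Q)); [| now apply Rmult_integral_contrapositive].
  transitivity (Q * l2 s ^ 2 / radius s ^ 3); [field; lra | rewrite K; field; auto].
Qed.

End FixedHeight.

Lemma slant_ratio_const_of_axis : Rbar_lt a b -> exists g, forall s, inI a b s -> slant_ratio s = g.
Proof.
  intros Hab; destruct (inI_inhabited a b Hab) as [s0 Hs0].
  set (Q := dot (gamma s0) d * / radius s0).
  assert (HQ : forall s, inI a b s -> dot (gamma s) d = Q * radius s).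
  { intros s Hs; destruct (radius_sq s Hs) as [_ Hr].
    pose proof (zero_derive_const a b _ s s0 axis_height_derive Hs Hs0) as E; cbv beta in E.
    unfold Q; rewrite <- E; field; lra. }
  exists (c / Q); intros s Hs; apply (slant_ratio_of_axis Q HQ s Hs).
Qed.

End HelixAxis.

Section ConstantSlantRatio.

Variable g : R.
Hypothesis ratio_const : forall s, inI a b s -> slant_ratio s = g.

Definition axis_weight := / sqrt (1 + g ^ 2).
Definition axis_vector t :=
  vadd (vscal (axis_weight * / radius t) (gamma t)) (vscal (g * axis_weight) (V t)).

Lemma axis_weight_pythagoras : axis_weight ^ 2 + (g * axis_weight) ^ 2 = 1.
Proof.
  assert (Hs : 0 < sqrt (1 + g ^ 2)) by (apply sqrt_lt_R0; nra).
  assert (Hs2 : sqrt (1 + g ^ 2) ^ 2 = 1 + g ^ 2) by (apply pow2_sqrt; nra).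
  unfold axis_weight; transitivity ((1 + g ^ 2) / sqrt (1 + g ^ 2) ^ 2); [field; lra |].
  rewrite Hs2; field; nra.
Qed.

Lemma axis_vector_derive s : inI a b s -> vderive axis_vector s vzero.
Proof.
  intros Hs; destruct (radius_sq s Hs) as [Hr2 Hr].
  destruct (frame_derivatives s Hs) as (Hg & _ & HV & _).
  destruct (coefficient_equations s Hs) as (_ & E2 & _).
  pose proof (kg_nonzero s Hs); pose proof (l2_nonzero s Hs).
  pose proof (vderive_add _ _ _ _ _
    (vderive_scal _ _ _ _ _ (derive_mult _ _ _ _ _ (derive_const axis_weight s)
                                                   (inv_radius_derive s Hs)) Hg)
    (vderive_scal _ _ _ _ _ (derive_const (g * axis_weight) s) HV)) as Hd.
  cbv beta in Hd; unfold axis_vector.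
  match type of Hd with vderive _ _ ?w => replace vzero with w; [exact Hd |] end.
  rewrite <- (ratio_const s Hs).
  replace (taug s) with (l1 s * kg s / l2 s) by (field_simplify_eq; auto).
  assert (Hsum : l1 s ^ 2 + l2 s ^ 2 <> 0) by (rewrite <- Hr2; apply pow_nonzero; lra).
  apply (frame_zero s _ Hs); rewrite (position s Hs); frame_dots s Hs;
    unfold slant_ratio;
    replace (radius s ^ 3) with ((l1 s ^ 2 + l2 s ^ 2) * radius s) by (rewrite <- Hr2; ring);
    field; repeat split; auto; lra.
Qed.

Lemma axis_vector_angle s : inI a b s ->
  dot (V s) (axis_vector s) = g * axis_weight /\ dot (axis_vector s) (axis_vector s) = 1.
Proof.
  intros Hs; destruct (radius_sq s Hs) as [Hr2 Hr].
  destruct (position_coords s Hs) as (HT & HV & HU).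
  pose proof (frame_parseval s (gamma s) Hs) as Hgg; rewrite HT, HV, HU in Hgg.
  unfold axis_vector; frame_dots s Hs.
  rewrite (dot_comm (V s) (gamma s)), HV, <- Hgg.
  replace (l1 s ^ 2 + 0 ^ 2 + l2 s ^ 2) with (radius s ^ 2) by (rewrite Hr2; ring).
  split; [ring |].
  transitivity (axis_weight ^ 2 + (g * axis_weight) ^ 2); [field; lra | apply axis_weight_pythagoras].
Qed.

Lemma helix_of_slant_ratio_const : Rbar_lt a b -> rel_normal_slant_helix a b V.
Proof.
  intros Hab; destruct (inI_inhabited a b Hab) as [s0 Hs0].
  exists (axis_vector s0), (acos (g * axis_weight)); split; [apply (axis_vector_angle s0 Hs0) |].
  intros s Hs.
  rewrite (vzero_derive_const a b axis_vector s0 s axis_vector_derive Hs0 Hs).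
  pose proof axis_weight_pythagoras.
  rewrite cos_acos; [apply (axis_vector_angle s Hs) | split; nra].
Qed.

End ConstantSlantRatio.

Lemma helix_iff_slant_ratio_const : Rbar_lt a b ->
  rel_normal_slant_helix a b V <-> exists g, forall s, inI a b s -> slant_ratio s = g.
Proof.
  intros Hab; split.
  - intros (d & phi & Hd & HV); exact (slant_ratio_const_of_axis d (cos phi) Hd HV Hab).
  - intros [g Hg]; exact (helix_of_slant_ratio_const g Hg Hab).
Qed.

(* |l2 e^F| is a nonzero constant and slant_ratio has the constant sign of kg,
   so slant_ratio is constant iff |l2 e^F| |slant_ratio| is. *)
Lemma slant_ratio_const_iff_curvature_function_const : Rbar_lt a b ->
  (exists g, forall s, inI a b s -> slant_ratio s = g) <->
  (exists c, forall s, inI a b s ->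
     kg s ^ 2 / Rpower (kg s ^ 2 + taug s ^ 2) (3 / 2) * exp (F s) = c).
Proof.
  intros Hab; destruct (inI_inhabited a b Hab) as [s0 Hs0].
  set (K := l2 s0 * exp (F s0)).
  assert (HK : forall s, inI a b s -> l2 s * exp (F s) = K)
    by (intros s Hs; exact (zero_derive_const a b _ s s0 l2_exp_F_derive Hs Hs0)).
  assert (PK : 0 < Rabs K).
  { apply Rabs_pos_lt; unfold K; pose proof (exp_pos (F s0)).
    apply Rmult_integral_contrapositive; split; [apply l2_nonzero, Hs0 | lra]. }
  split.
  - intros [g Hg]; exists (Rabs K * Rabs g); intros s Hs.
    rewrite curvature_function_coords, HK, Hg; auto.
  - intros [c Hc]; apply (abs_const_same_sign a b slant_ratio kg (c / Rabs K) Hab);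
      auto using kg_continuous, slant_ratio_sign.
    intros s Hs; rewrite <- (Hc s Hs), curvature_function_coords, HK by auto; field; lra.
Qed.

End PositionInTUPlane.

End DarbouxFrame.

Theorem theorem3p2 (a b : Rbar) (gamma T V U : R -> vec3) (kg kn taug : R -> R) :
  Rbar_lt a b ->
  darboux_frame a b gamma T V U kg kn taug ->
  (forall s, inI a b s -> kg s <> 0) ->
  (exists lam1 lam2 : R -> R,
      (forall s, inI a b s -> ex_derive lam1 s /\ ex_derive lam2 s) /\
      (forall s, inI a b s ->
         gamma s = vadd (vscal (lam1 s) (T s)) (vscal (lam2 s) (U s)))) ->
  forall F : R -> R,
    (forall s, inI a b s -> is_derive F s (taug s * kn s / kg s)) ->
    (rel_normal_slant_helix a b V <->
     exists c : R, forall s, inI a b s ->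
       (kg s) ^ 2 / Rpower ((kg s) ^ 2 + (taug s) ^ 2) (3 / 2) * exp (F s) = c).
Proof.
  intros Hab Hframe Hkg (l1 & l2 & Hl & Hpos) F HF.
  rewrite (helix_iff_slant_ratio_const a b gamma T V U kg kn taug Hframe
             l1 l2 Hl Hpos Hkg F HF Hab).
  exact (slant_ratio_const_iff_curvature_function_const a b gamma T V U kg kn taug Hframe
           l1 l2 Hl Hpos Hkg F HF Hab).
Qed.
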